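(* For every integer $k \ge 1$, the edge set of the hypercube $Q_{2k}$ can be partitioned into the edge sets of $k$ pairwise edge-disjoint spanning trees of $Q_{2k}$ together with a matching consisting of exactly $k$ edges.
   Context: The $n$-dimensional hypercube $Q_n$ is the graph whose vertices are all binary vectors of length $n$, with two vertices adjacent if and only if they differ in exactly one coordinate. A matching is a set of pairwise vertex-disjoint edges. *)

From mathcomp Require Import all_boot.
Set Implicit Arguments. Unset Strict Implicit. Unset Printing Implicit Defensive.

Definition qvert (n : nat) := {ffun 'I_n -> bool}.

Definition qadj (n : nat) (x y : qvert n) : bool :=
  #|[set i : 'I_n | x i != y i]| == 1.

Definition qedges (n : nat) : {set {set qvert n}} :=
  [set e : {set qvert n} |
    [exists x : qvert n, exists y : qvert n, qadj x y && (e == [set x; y])]].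

Definition erel (n : nat) (F : {set {set qvert n}}) : rel (qvert n) :=
  fun x y => (x != y) && ([set x; y] \in F).

Definition connectedE (n : nat) (F : {set {set qvert n}}) : Prop :=
  forall x y : qvert n, connect (erel F) x y.

Definition acyclicE (n : nat) (F : {set {set qvert n}}) : Prop :=
  forall s : seq (qvert n), uniq s -> 3 <= size s -> ~~ cycle (erel F) s.

Definition spanning_tree (n : nat) (F : {set {set qvert n}}) : Prop :=
  [/\ F \subset qedges n, connectedE F & acyclicE F].

Definition matching (n : nat) (M : {set {set qvert n}}) : Prop :=
  M \subset qedges n /\
  forall e f, e \in M -> f \in M -> e != f -> [disjoint e & f].

From mathcomp Require Import all_boot.
Set Implicit Arguments. Unset Strict Implicit. Unset Printing Implicit Defensive.

(* The decomposition is built by induction, passing from Q_n to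
   Q_(n+2) = Q_n x C_4.  The induction carries a certificate: a symmetric
   labelling of edges by tree indices (None on the matching) and, for each
   tree, a parent function along edges of its label whose height strictly
   decreases towards a root.  Such a parent function describes a spanning
   tree with 2^n - 1 edges ([parent_edges_tree], [card_parent_edges]); the
   labelling makes trees and matching pairwise disjoint; and since Q_(2k)
   has exactly k * 2^(2k) edges ([card_qedges]), the k trees and k matching
   edges then cover all of Q_(2k) ([qedges_cover]).  The induction step
   ([step_certificate]) places the old decomposition in the four copies of
   Q_n joined by 4-cycles, adds one fresh tree, and reroutes the old tree 0
   and the old matching; the base case is the 4-cycle Q_2. *)

Lemma set2_eq (T : finType) (x y a b : T) :
  [set x; y] = [set a; b] -> (x = a /\ y = b) \/ (x = b /\ y = a).
Proof.
move=> E.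
have hx : x \in [set a; b] by rewrite -E !inE eqxx.
have hy : y \in [set a; b] by rewrite -E !inE eqxx orbT.
have ha : a \in [set x; y] by rewrite E !inE eqxx.
have hb : b \in [set x; y] by rewrite E !inE eqxx orbT.
case/set2P: hx => Hx; case/set2P: hy => Hy; subst.
- by case/set2P: hb => ->; left.
- by left.
- by right.
- by case/set2P: ha => ->; right.
Qed.

Lemma disjoint_set2 (T : finType) (x y z w : T) :
  [disjoint [set x; y] & [set z; w]] = [&& x != z, x != w, y != z & y != w].
Proof.
apply/idP/idP => [dis|/and4P [xz xw yz yw]].
  have := disjointFr dis (set21 x y); have := disjointFr dis (set22 x y).
  by rewrite !inE => /norP [-> ->] /norP [-> ->].
rewrite -setI_eq0; apply/eqP/setP=> t; rewrite !inE.
apply/negbTE/negP=> /andP [/orP [] /eqP -> /orP [] /eqP E].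
- by rewrite E eqxx in xz.
- by rewrite E eqxx in xw.
- by rewrite E eqxx in yz.
- by rewrite E eqxx in yw.
Qed.

Lemma lex_lt C l1 l2 h1 h2 : l1 < l2 -> h1 < C -> C * l1 + h1 < C * l2 + h2.
Proof.
move=> hl hh; apply: (@leq_trans (C * l1.+1)); first by rewrite mulnS addnC ltn_add2r.
exact: leq_trans (leq_mul (leqnn C) hl) (leq_addr _ _).
Qed.

Lemma card_bigcup_disjoint (T : finType) K (F : 'I_K -> {set T}) :
  (forall i j, i != j -> [disjoint F i & F j]) ->
  #|\bigcup_(i < K) F i| = \sum_(i < K) #|F i|.
Proof.
elim: K F => [|K IH] F disF; first by rewrite !big_ord0 cards0.
rewrite !big_ord_recr /= -IH => [|i j ne]; last first.
  by apply: disF; rewrite -val_eqE /= val_eqE in ne *.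
apply/eqP; rewrite (leq_card_setU _ _).2 disjoint_sym; apply: bigcup_disjoint => i _.
by apply: disF; rewrite -val_eqE /= neq_ltn ltn_ord orbT.
Qed.

Definition flip n (i : 'I_n) (x : qvert n) : qvert n :=
  [ffun j => if j == i then ~~ x j else x j].

Lemma qadjP n (x y : qvert n) : reflect (exists i, y = flip i x) (qadj x y).
Proof.
apply: (iffP cards1P) => [[i Di]|[i ->]]; exists i.
  apply/ffunP=> j; rewrite ffunE; have := congr1 (fun A : {set _} => j \in A) Di.
  by rewrite !inE; case: (eqVneq j i) => _ /=; case: (x j); case: (y j).
by apply/setP=> j; rewrite !inE ffunE; case: (j == i); case: (x j).
Qed.

Lemma qadj_sym n (x y : qvert n) : qadj x y = qadj y x.
Proof.
rewrite /qadj (_ : [set i | x i != y i] = [set i | y i != x i]) //.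
by apply/setP=> i; rewrite !inE eq_sym.
Qed.

Lemma qadj_irr n (x : qvert n) : ~~ qadj x x.
Proof. by apply/qadjP=> -[i /ffunP/(_ i)]; rewrite ffunE eqxx; case: (x i). Qed.

Lemma qadj_neq n (u v : qvert n) : qadj u v -> (u == v) = false.
Proof. by case: (eqVneq u v) => // ->; rewrite (negbTE (qadj_irr v)). Qed.

Lemma qedges_in n (x y : qvert n) : qadj x y -> [set x; y] \in qedges n.
Proof.
by move=> xy; rewrite inE; apply/existsP; exists x; apply/existsP; exists y; rewrite xy eqxx.
Qed.

Lemma qedgesP n e : e \in qedges n -> exists x y, e = [set x; y] /\ qadj x y.
Proof. by rewrite inE => /existsP [x /existsP [y /andP [xy /eqP ->]]]; exists x, y. Qed.

Lemma qedges_at n (x : qvert n) :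
  [set e in qedges n | x \in e] = [set [set x; flip i x] | i : 'I_n].
Proof.
apply/setP=> e; rewrite inE; apply/andP/imsetP => [[/qedgesP [s [t [-> st]]] xe]|[i _ ->]].
  case/set2P: xe => ->; last rewrite setUC qadj_sym in st *.
  1,2: by case/qadjP: st => i ->; exists i.
by rewrite setU11 qedges_in //; apply/qadjP; exists i.
Qed.

Lemma card_qedges_at n (x : qvert n) : #|[set e in qedges n | x \in e]| = n.
Proof.
rewrite qedges_at card_imset ?card_ord // => i j /set2_eq [[_ E]|[E _]].
- by move/ffunP/(_ i): E; rewrite !ffunE eqxx; case: eqP => [//|_]; case: (x i).
- by move/ffunP/(_ j): E; rewrite ffunE eqxx; case: (x j).
Qed.

(* Handshake count: Q_n has n * 2^(n-1) edges. *)
Lemma card_qedges n : 2 * #|qedges n| = n * 2 ^ n.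
Proof.
have card_edge e : e \in qedges n -> #|e| = 2.
  by case/qedgesP=> x [y [-> /qadj_neq xy]]; rewrite cards2 xy.
rewrite mulnC -sum_nat_const (eq_bigr _ (fun e E => esym (card_edge e E))).
under eq_bigr do rewrite -sum1_card big_mkcond /=.
rewrite exchange_big (_ : n * 2 ^ n = \sum_(x : qvert n) n); last first.
  by rewrite sum_nat_const card_ffun card_bool card_ord mulnC.
apply: eq_bigr => x _; rewrite -big_mkcondr sum1dep_card -[RHS](card_qedges_at x).
by apply: eq_card => e; rewrite inE.
Qed.

Lemma erel_sym n (F : {set {set qvert n}}) : symmetric (erel F).
Proof. by move=> x y; rewrite /erel eq_sym setUC. Qed.

Definition parent_edges n (r : qvert n) (p : qvert n -> qvert n) : {set {set qvert n}} :=
  [set [set v; p v] | v in [set~ r]].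

Section ParentTree.
Variables (n : nat) (r : qvert n) (p : qvert n -> qvert n) (h : qvert n -> nat).
Hypothesis parent_adj : forall v, v != r -> qadj v (p v).
Hypothesis parent_dec : forall v, v != r -> h (p v) < h v.

Local Notation F := (parent_edges r p).

Lemma parent_of_lower v u : erel F v u -> h u <= h v -> p v = u.
Proof.
case/andP=> _ /imsetP [w]; rewrite in_setC1 => wr /set2_eq [[-> ->]|[-> ->]] // le.
by have := parent_dec wr; rewrite ltnNge le.
Qed.

Lemma connect_root v : connect (erel F) v r.
Proof.
elim: {v}(h v).+1 {-2}v (ltnSn (h v)) => // m IH v hv.
case: (eqVneq v r) => [->|vr]; first exact: connect0.
have e : erel F v (p v).
  rewrite /erel (_ : [set v; p v] \in F) ?andbT; last by apply: imset_f; rewrite !inE.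
  by apply/eqP=> E; have := parent_dec vr; rewrite -E ltnn.
by apply: connect_trans (connect1 e) (IH _ _); apply: leq_trans (parent_dec vr) _.
Qed.

(* In a cycle the highest vertex would have two distinct parents. *)
Lemma parent_edges_tree : spanning_tree F.
Proof.
split.
- apply/subsetP=> e /imsetP [v]; rewrite in_setC1 => vr ->.
  exact: qedges_in (parent_adj vr).
- move=> x y; apply: connect_trans (connect_root x) _.
  by rewrite (sym_connect_sym (@erel_sym n F)) connect_root.
move=> s us ss; apply/negP=> cs.
have s0 : head r s \in s by case: s ss {us cs} => // a s' _; rewrite mem_head.
case: (arg_maxnP h s0) => v vs vmax.
case: (rot_to vs) => i t Et.
have ut : uniq (v :: t) by rewrite -Et rot_uniq.
have ct : cycle (erel F) (v :: t) by rewrite -Et rot_cycle.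
have st : 3 <= size (v :: t) by rewrite -Et size_rot.
have mt w : w \in v :: t -> h w <= h v by rewrite -Et mem_rot => /vmax.
case: t Et ut ct st mt => [|u [|w0 s2]] //= _ /and3P [_ uw _] ct _ mt.
move: ct; rewrite -cats1 cat_path /= andbT => /and4P [evu _ _ ewv].
set w := last w0 s2 in ewv.
have ws : w \in w0 :: s2 by apply: mem_last.
have pu : p v = u by apply: parent_of_lower evu (mt _ _); rewrite in_cons mem_head orbT.
have pw : p v = w.
  by apply: parent_of_lower (mt _ _); rewrite 1?erel_sym // in_cons in_cons ws !orbT.
by move: uw; rewrite -pu pw ws.
Qed.

(* v |-> {v, p v} is injective: otherwise v and p v would be each other's
   parents, contradicting the decrease of h. *)
Lemma card_parent_edges : #|F| = 2 ^ n - 1.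
Proof.
rewrite card_in_imset ?cardsC1 ?card_ffun ?card_bool ?card_ord ?subn1 //.
move=> v w; rewrite !inE => vr wr /set2_eq [[//]|[vpw wpv]].
have := parent_dec wr; rewrite -vpw -wpv => lt_vpv.
by have := ltn_trans lt_vpv (parent_dec vr); rewrite ltnn.
Qed.

End ParentTree.

Definition certificate n K (lab : qvert n -> qvert n -> option 'I_K)
    (p : 'I_K -> qvert n -> qvert n) (h : 'I_K -> qvert n -> nat)
    (ma mb : 'I_K -> qvert n) : Prop :=
  [/\ forall s t, lab s t = lab t s,
      forall i v, v != ma i ->
        [&& qadj v (p i v), lab v (p i v) == Some i & h i (p i v) < h i v],
      forall i, qadj (ma i) (mb i) /\ lab (ma i) (mb i) = None
    & forall i j, i != j -> [disjoint [set ma i; mb i] & [set ma j; mb j]]].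

Definition decomposable n K : Prop :=
  exists lab p h ma mb, @certificate n K lab p h ma mb.

(* Counting: K edge-disjoint spanning trees and K further edges of Q_(2K)
   already account for all K * 2^(2K) edges, so they cover Q_(2K). *)
Lemma qedges_cover K (T : 'I_K -> {set {set qvert (2 * K)}})
    (M : {set {set qvert (2 * K)}}) :
    (forall i, T i \subset qedges (2 * K)) -> M \subset qedges (2 * K) ->
    (forall i, #|T i| = 2 ^ (2 * K) - 1) -> #|M| = K ->
    (forall i j, i != j -> [disjoint T i & T j]) -> (forall i, [disjoint T i & M]) ->
  qedges (2 * K) = (\bigcup_(i < K) T i) :|: M.
Proof.
move=> subT subM cardT cardM disTT disTM.
apply/esym/eqP; rewrite eqEcard subUset subM andbT; apply/andP; split.
  by apply/bigcupsP=> i _; apply: subT.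
have -> : #|qedges (2 * K)| = K * 2 ^ (2 * K).
  by apply/eqP; rewrite -(eqn_pmul2l (isT : 0 < 2)) mulnA card_qedges.
rewrite cardsU disjoint_setI0 ?cards0 ?subn0; last first.
  by rewrite disjoint_sym; apply: bigcup_disjoint => i _; rewrite disjoint_sym.
rewrite card_bigcup_disjoint // (eq_bigr _ (fun i _ => cardT i)) sum_nat_const card_ord.
by rewrite cardM mulnBr muln1 subnK // leq_pmulr // expn_gt0.
Qed.

(* A certificate yields the decomposition: tree i consists of the parent
   edges of [p i]; the labelling makes the trees and the matching disjoint. *)
Lemma decomposition_of_certificate K : decomposable (2 * K) K ->
  exists (T : 'I_K -> {set {set qvert (2 * K)}}) (M : {set {set qvert (2 * K)}}),
    [/\ forall i, spanning_tree (T i),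
        forall i j, i != j -> [disjoint T i & T j],
        matching M /\ #|M| = K,
        forall i, [disjoint T i & M]
      & qedges (2 * K) = (\bigcup_(i < K) T i) :|: M].
Proof.
move=> [lab [p [h [ma [mb [lab_sym par matched matched_dis]]]]]].
have lab_edge s t s' t' : [set s; t] = [set s'; t'] -> lab s t = lab s' t'.
  by case/set2_eq=> [[-> ->]|[-> ->]]; last apply: lab_sym.
have adj i v : v != ma i -> qadj v (p i v) by move/par/and3P=> [].
have dec i v : v != ma i -> h i (p i v) < h i v by move/par/and3P=> [].
pose T i := parent_edges (ma i) (p i).
pose M := [set [set ma i; mb i] | i : 'I_K].
have tree i : spanning_tree (T i) by apply: parent_edges_tree (adj i) (dec i).
have lab_T i e : e \in T i -> exists s t, e = [set s; t] /\ lab s t = Some i.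
  by case/imsetP=> v; rewrite in_setC1 => /(par i)/and3P [_ /eqP l _] ->; exists v, (p i v).
have M_inj : injective (fun i => [set ma i; mb i]).
  move=> i j /= E; apply/eqP/negP=> /negP /matched_dis.
  by rewrite E disjoint_set2 !eqxx !andbF.
have subM : M \subset qedges (2 * K).
  by apply/subsetP=> e /imsetP [i _ ->]; apply: qedges_in (matched i).1.
have cardM : #|M| = K by rewrite card_imset // card_ord.
have disTT i j : i != j -> [disjoint T i & T j].
  move=> ij; rewrite -setI_eq0; apply/eqP/setP=> e; rewrite !inE.
  apply/negbTE/negP=> /andP [/lab_T [s [t [-> l]]] /lab_T [s' [t' [E l']]]].
  by move: ij; rewrite -(inj_eq (@Some_inj _)) -l -l' (lab_edge _ _ _ _ E) eqxx.
have disTM i : [disjoint T i & M].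
  rewrite -setI_eq0; apply/eqP/setP=> e; rewrite !inE.
  apply/negbTE/negP=> /andP [/lab_T [s [t [-> l]]] /imsetP [j _ E]].
  by move: (matched j).2; rewrite -(lab_edge _ _ _ _ E) l.
exists T, M; split=> //.
- split=> //; split=> // e f /imsetP [i _ ->] /imsetP [j _ ->] ef.
  by apply: matched_dis; apply: contraNneq ef => ->.
apply: qedges_cover => // [i|i]; first by case: (tree i).
exact: card_parent_edges (dec i).
Qed.

(* A vertex of Q_(n+2) is a vertex u of Q_n together with two bits x, y:
   Q_(n+2) = Q_n x Q_2. *)
Definition base n (s : qvert n.+2) : qvert n := [ffun j => s (lift ord0 (lift ord0 j))].
Definition xc n (s : qvert n.+2) : bool := s ord0.
Definition yc n (s : qvert n.+2) : bool := s (lift ord0 ord0).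
Definition pt n (u : qvert n) (x y : bool) : qvert n.+2 :=
  [ffun i => if unlift ord0 i is Some i' then
               (if unlift ord0 i' is Some j then u j else y) else x].

Lemma base_pt n (u : qvert n) x y : base (pt u x y) = u.
Proof. by apply/ffunP=> j; rewrite !ffunE !liftK. Qed.
Lemma xc_pt n (u : qvert n) x y : xc (pt u x y) = x.
Proof. by rewrite /xc ffunE unlift_none. Qed.
Lemma yc_pt n (u : qvert n) x y : yc (pt u x y) = y.
Proof. by rewrite /yc ffunE liftK unlift_none. Qed.
Definition ptE := (base_pt, xc_pt, yc_pt).

Lemma ptP n (s : qvert n.+2) : exists u x y, s = pt u x y.
Proof.
exists (base s), (xc s), (yc s); apply/ffunP=> i; rewrite ffunE.
case: unliftP => [i' ->|->] //; case: unliftP => [j ->|->] //.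
by rewrite ffunE.
Qed.

Lemma pt_eq n (u v : qvert n) x y x' y' :
  (pt u x y == pt v x' y') = [&& u == v, x == x' & y == y'].
Proof.
apply/idP/idP => [/eqP E|/and3P [/eqP-> /eqP-> /eqP->] //].
have := congr1 (@base n) E; have := congr1 (@xc n) E; have := congr1 (@yc n) E.
by rewrite !ptE => -> -> ->; rewrite !eqxx.
Qed.

Lemma card_setP m (P : pred 'I_m) : #|[set i | P i]| = \sum_(i < m) (P i : nat).
Proof.
by rewrite -sum1_card big_mkcond /=; apply: eq_bigr => i _; rewrite inE; case: (P i).
Qed.

Lemma qadj_copy n (u v : qvert n) x y : qadj (pt u x y) (pt v x y) = qadj u v.
Proof.
rewrite /qadj !card_setP !big_ord_recl !ffunE !unlift_none !liftK !unlift_none !eqxx.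
by congr (_ == 1); apply: eq_bigr => j _; rewrite !ffunE !liftK.
Qed.

Lemma qadj_x n (u : qvert n) x x' y : x != x' -> qadj (pt u x y) (pt u x' y).
Proof.
move=> xx'; apply/qadjP; exists ord0; apply/ffunP=> i; rewrite !ffunE.
case: unliftP => [i' ->|->]; first by rewrite eq_sym eq_liftF.
by rewrite eqxx; case: x x' xx' => [] [].
Qed.

Lemma qadj_y n (u : qvert n) x y y' : y != y' -> qadj (pt u x y) (pt u x y').
Proof.
move=> yy'; apply/qadjP; exists (lift ord0 ord0); apply/ffunP=> i; rewrite !ffunE.
case: unliftP => [i' ->|->]; last by rewrite eq_liftF.
rewrite (inj_eq lift_inj); case: unliftP => [j ->|->]; first by rewrite eq_sym eq_liftF.
by rewrite eqxx; case: y y' yy' => [] [].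
Qed.

Definition cycle_pos (x y : bool) : nat :=
  match x, y with
  | false, false => 0 | true, false => 1 | true, true => 2 | false, true => 3
  end.

(* The induction step: a certificate for Q_n with k+1 trees yields one for
   Q_(n+2) with k+2 trees.  Below a, b is the matching edge of index 0,
   which is attached to the old tree 0. *)
Section Step.
Variables (n k : nat).
Variable lab : qvert n -> qvert n -> option 'I_k.+1.
Variable p : 'I_k.+1 -> qvert n -> qvert n.
Variable h : 'I_k.+1 -> qvert n -> nat.
Variables ma mb : 'I_k.+1 -> qvert n.
Hypothesis lab_sym : forall s t, lab s t = lab t s.
Hypothesis par : forall i v, v != ma i ->
  [&& qadj v (p i v), lab v (p i v) == Some i & h i (p i v) < h i v].
Hypothesis matched : forall i, qadj (ma i) (mb i) /\ lab (ma i) (mb i) = None.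
Hypothesis matched_dis : forall i j, i != j ->
  [disjoint [set ma i; mb i] & [set ma j; mb j]].

Local Notation a := (ma ord0).
Local Notation b := (mb ord0).

Lemma root_ne_mate i : ma i != mb i.
Proof. by rewrite (qadj_neq (matched i).1). Qed.

Lemma matched_apart i j : i != j ->
  [/\ ma i != ma j, ma i != mb j, mb i != ma j & mb i != mb j].
Proof. by move/matched_dis; rewrite disjoint_set2 => /and4P. Qed.

Lemma matched_ne_ab i : i != ord0 -> ([set ma i; mb i] == [set a; b]) = false.
Proof.
move=> ni; apply/negbTE/negP=> /eqP /set2_eq [[E _]|[E _]];
  by have [/eqP + /eqP] := matched_apart ni.
Qed.

Definition other_root (u : qvert n) : option 'I_k.+1 :=
  [pick i | (i != ord0) && (ma i == u)].

Lemma other_root_root i : i != ord0 -> other_root (ma i) = Some i.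
Proof.
move=> ni; rewrite /other_root; case: pickP => [j /andP [nj /eqP E]|/(_ i)].
  by case: (eqVneq j i) => [->//|/matched_apart []]; rewrite E eqxx.
by rewrite ni eqxx.
Qed.

Lemma other_rootP u i : other_root u = Some i -> i != ord0 /\ ma i = u.
Proof. by rewrite /other_root; case: pickP => [j /andP [nj /eqP E] [<-]|]. Qed.

Lemma other_root_mate j : other_root (mb j) = None.
Proof.
rewrite /other_root; case: pickP => [i /andP [ni /eqP E]|//].
case: (eqVneq i j) => [Eij|/matched_apart [_ + _ _]]; last by rewrite E eqxx.
by move: (root_ne_mate i); rewrite E Eij eqxx.
Qed.

Lemma other_root_a : other_root a = None.
Proof.
rewrite /other_root; case: pickP => [i /andP [ni /eqP E]|//].
by have [] := matched_apart ni; rewrite E eqxx.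
Qed.

Lemma b_ne_a : (b == a) = false.
Proof. by rewrite eq_sym (negbTE (root_ne_mate ord0)). Qed.

Lemma mate_ne_a i : i != ord0 -> mb i != a.
Proof. by case/matched_apart. Qed.

(* Q_(n+2) consists of four copies of Q_n indexed by (x, y); they are joined
   at every u by the 4-cycle  (F,F) - (T,F) - (T,T) - (F,T) - (F,F).
   The new trees are [fresh], [ext 0] (grown from old tree 0) and [ext i]
   (grown from old tree i <> 0); the new matching consists of the old matching
   edges in copy (F,F) and the edge {a, b} in copy (T,F). *)
Definition fresh : 'I_k.+2 := ord0.
Definition ext (i : 'I_k.+1) : 'I_k.+2 := lift ord0 i.

Definition lab_xedge (u : qvert n) (y : bool) : option 'I_k.+2 :=
  if other_root u is Some i then Some (ext i)
  else if y && (u == a) then Some fresh else Some (ext ord0).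

Definition lab_yedge (u : qvert n) (x : bool) : option 'I_k.+2 :=
  if x then
    if other_root u is Some i then Some (ext i)
    else if u == a then Some (ext ord0) else Some fresh
  else Some fresh.

Definition lab_tree (x y : bool) (i : 'I_k.+1) : 'I_k.+2 :=
  if i == ord0 then (if x == y then ext ord0 else fresh) else ext i.

Definition lab_unmatched (x y : bool) (e : {set qvert n}) : option 'I_k.+2 :=
  if x then (if y then Some fresh else if e == [set a; b] then None else Some (ext ord0))
  else (if y then Some (ext ord0) else None).

Definition labc (u : qvert n) (x y : bool) (v : qvert n) (x' y' : bool) : option 'I_k.+2 :=
  if u == v then
    if (x != x') && (y == y') then lab_xedge u y
    else if (x == x') && (y != y') then lab_yedge u x
    else None
  else if (x == x') && (y == y') then
    if lab u v is Some i then Some (lab_tree x y i) else lab_unmatched x y [set u; v]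
  else None.

Definition lab2 (s t : qvert n.+2) := labc (base s) (xc s) (yc s) (base t) (xc t) (yc t).

Lemma lab2_sym s t : lab2 s t = lab2 t s.
Proof.
rewrite /lab2 /labc; case: (eqVneq (base s) (base t)) => [->|_].
  by case: (xc s) (xc t) (yc s) (yc t) => [] [] [] [].
rewrite lab_sym setUC.
by case: (xc s) (xc t) (yc s) (yc t) => [] [] [] [].
Qed.

Lemma lab2_xedge u x x' y : x != x' -> lab2 (pt u x y) (pt u x' y) = lab_xedge u y.
Proof. by rewrite /lab2 !ptE /labc !eqxx => ->. Qed.

Lemma lab2_yedge u x y y' : y != y' -> lab2 (pt u x y) (pt u x y') = lab_yedge u x.
Proof. by rewrite /lab2 !ptE /labc !eqxx /= => ->. Qed.

Lemma lab2_parent i u x y : u != ma i ->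
  lab2 (pt u x y) (pt (p i u) x y) = Some (lab_tree x y i).
Proof.
move/par/and3P=> [adj /eqP l _].
by rewrite /lab2 !ptE /labc (qadj_neq adj) !eqxx l.
Qed.

Lemma lab2_matched i x y :
  lab2 (pt (ma i) x y) (pt (mb i) x y) = lab_unmatched x y [set ma i; mb i].
Proof. by rewrite /lab2 !ptE /labc (qadj_neq (matched i).1) !eqxx (matched i).2. Qed.

Lemma qadj_parent i u x y : u != ma i -> qadj (pt u x y) (pt (p i u) x y).
Proof. by move/par/and3P=> [adj _ _]; rewrite qadj_copy. Qed.

Lemma qadj_matched i x y : qadj (pt (ma i) x y) (pt (mb i) x y).
Proof. by rewrite qadj_copy (matched i).1. Qed.

Lemma h_parent i u : u != ma i -> h i (p i u) < h i u.
Proof. by move/par/and3P=> []. Qed.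

Definition pmain_c (u : qvert n) (x y : bool) : qvert n.+2 :=
  match x, y with
  | false, false => pt (p ord0 u) false false
  | true, false => if other_root u is Some i then pt (mb i) true false else pt u false false
  | true, true => if u == a then pt u true false else pt (p ord0 u) true true
  | false, true => if other_root u is Some i then pt (mb i) false true
                   else if u == a then pt b false true else pt u true true
  end.
Definition pfresh_c (u : qvert n) (x y : bool) : qvert n.+2 :=
  match x, y with
  | true, false => pt (p ord0 u) true false
  | true, true => if u == a then pt b true true
                  else if other_root u is Some i then pt (mb i) true true else pt u true false
  | false, true => if u == a then pt u true true else pt (p ord0 u) false true
  | false, false => pt u false true
  end.
Definition pext_c (i : 'I_k.+1) (u : qvert n) (x y : bool) : qvert n.+2 :=
  if u == ma i then
    match x, y with
    | true, false => pt u false false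
    | true, true => pt u true false
    | false, true => pt u true true
    | false, false => pt u false false
    end
  else pt (p i u) x y.

(* Heights are lexicographic: first a level depending on the copy, then the
   old height; [hbound] bounds all old heights. *)
Definition lev_main (u : qvert n) (x y : bool) : nat :=
  match x, y with
  | false, false => 0
  | true, false => if other_root u is Some _ then 2 else 1
  | true, true => 3
  | false, true => if other_root u is Some _ then 5 else if u == a then 5 else 4
  end.
Definition lev_fresh (u : qvert n) (x y : bool) : nat :=
  match x, y with
  | true, false => 0
  | true, true => if u == a then 2 else if other_root u is Some _ then 2 else 1
  | false, true => 3
  | false, false => 4
  end.

Definition hbound := (\max_(i : 'I_k.+1) \max_(v : qvert n) h i v).+1.

Lemma hbound_lt i j l1 l2 u v : l1 < l2 -> hbound * l1 + h i u < hbound * l2 + h j v.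
Proof.
move=> l12; apply: lex_lt l12 _; rewrite ltnS; apply: leq_trans (leq_bigmax u) _.
exact: (leq_bigmax (F := fun i => \max_(v : qvert n) h i v) i).
Qed.

Definition pmain (s : qvert n.+2) := pmain_c (base s) (xc s) (yc s).
Definition pfresh (s : qvert n.+2) := pfresh_c (base s) (xc s) (yc s).
Definition pext i (s : qvert n.+2) := pext_c i (base s) (xc s) (yc s).
Definition hmain (s : qvert n.+2) :=
  hbound * lev_main (base s) (xc s) (yc s) + h ord0 (base s).
Definition hfresh (s : qvert n.+2) :=
  hbound * lev_fresh (base s) (xc s) (yc s) + h ord0 (base s).
Definition hext i (s : qvert n.+2) := hbound * cycle_pos (xc s) (yc s) + h i (base s).

Lemma pmain_ok s : s != pt a false false ->
  [&& qadj s (pmain s), lab2 s (pmain s) == Some (ext ord0) & hmain (pmain s) < hmain s].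
Proof.
case: (ptP s) => u [x [y ->]]; rewrite /pmain /hmain /lev_main !ptE.
case: x; case: y => /=.
- move=> _; case: (eqVneq u a) => [->|na]; rewrite /= ?ptE.
    by rewrite qadj_y // lab2_yedge // /lab_yedge other_root_a eqxx hbound_lt.
  by rewrite qadj_parent // lab2_parent // ltn_add2l h_parent.
- move=> _; case E: (other_root u) => [i|]; rewrite /= ?ptE.
    have [ni <-] := other_rootP E.
    by rewrite qadj_matched lab2_matched /lab_unmatched matched_ne_ab // other_root_mate hbound_lt.
  by rewrite qadj_x // lab2_xedge // /lab_xedge E hbound_lt.
- move=> _; case E: (other_root u) => [i|]; rewrite /= ?ptE.
    have [ni <-] := other_rootP E.
    by rewrite qadj_matched lab2_matched other_root_mate (negbTE (mate_ne_a ni)) hbound_lt.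
  case: (eqVneq u a) => [->|na]; rewrite /= ?ptE.
    by rewrite qadj_matched lab2_matched other_root_mate b_ne_a hbound_lt.
  by rewrite qadj_x // lab2_xedge // /lab_xedge E (negbTE na) hbound_lt.
- rewrite pt_eq !eqxx !andbT => na; rewrite /= ?ptE.
  by rewrite qadj_parent // lab2_parent // ltn_add2l h_parent.
Qed.

Lemma pfresh_ok s : s != pt a true false ->
  [&& qadj s (pfresh s), lab2 s (pfresh s) == Some fresh & hfresh (pfresh s) < hfresh s].
Proof.
case: (ptP s) => u [x [y ->]]; rewrite /pfresh /hfresh /lev_fresh !ptE.
case: x; case: y => /=.
- move=> _; case: (eqVneq u a) => [->|na]; rewrite /= ?ptE.
    by rewrite qadj_matched lab2_matched other_root_mate b_ne_a hbound_lt.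
  case E: (other_root u) => [i|]; rewrite /= ?ptE.
    have [ni <-] := other_rootP E.
    by rewrite qadj_matched lab2_matched other_root_mate (negbTE (mate_ne_a ni)) hbound_lt.
  by rewrite qadj_y // lab2_yedge // /lab_yedge E (negbTE na) hbound_lt.
- rewrite pt_eq !eqxx !andbT => na; rewrite /= ?ptE.
  by rewrite qadj_parent // lab2_parent // ltn_add2l h_parent.
- move=> _; case: (eqVneq u a) => [->|na]; rewrite /= ?ptE.
    by rewrite qadj_x // lab2_xedge // /lab_xedge other_root_a !eqxx hbound_lt.
  by rewrite qadj_parent // lab2_parent // ltn_add2l h_parent.
- by move=> _; rewrite qadj_y // lab2_yedge // !ptE hbound_lt.
Qed.

Lemma pext_ok i s : i != ord0 -> s != pt (ma i) false false ->
  [&& qadj s (pext i s), lab2 s (pext i s) == Some (ext i) & hext i (pext i s) < hext i s].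
Proof.
move=> ni; case: (ptP s) => u [x [y ->]]; rewrite /pext /hext /pext_c !ptE.
case: (eqVneq u (ma i)) => [->|na]; last first.
  move=> _; rewrite qadj_parent // lab2_parent // !ptE /lab_tree (negbTE ni) eqxx.
  by rewrite ltn_add2l h_parent.
rewrite pt_eq eqxx /=; case: x; case: y => //= _; rewrite /= ?ptE.
- by rewrite qadj_y // lab2_yedge // /lab_yedge other_root_root // eqxx hbound_lt.
- by rewrite qadj_x // lab2_xedge // /lab_xedge other_root_root // eqxx hbound_lt.
- by rewrite qadj_x // lab2_xedge // /lab_xedge other_root_root // eqxx hbound_lt.
Qed.

Definition p2 (j : 'I_k.+2) : qvert n.+2 -> qvert n.+2 :=
  if unlift ord0 j is Some i then (if i == ord0 then pmain else pext i) else pfresh.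
Definition h2 (j : 'I_k.+2) : qvert n.+2 -> nat :=
  if unlift ord0 j is Some i then (if i == ord0 then hmain else hext i) else hfresh.
Definition ma2 (j : 'I_k.+2) : qvert n.+2 :=
  if unlift ord0 j is Some i then pt (ma i) false false else pt a true false.
Definition mb2 (j : 'I_k.+2) : qvert n.+2 :=
  if unlift ord0 j is Some i then pt (mb i) false false else pt b true false.

Lemma step_certificate : certificate lab2 p2 h2 ma2 mb2.
Proof.
split.
- exact: lab2_sym.
- move=> j v; case: (unliftP ord0 j) => [i ->|->]; rewrite /p2 /h2 /ma2 ?liftK ?unlift_none.
    case: (eqVneq i ord0) => [->|ni]; first exact: pmain_ok.
    exact: pext_ok ni.
  exact: pfresh_ok.
- move=> j; rewrite /ma2 /mb2; case: (unliftP ord0 j) => [i _|_];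
    by rewrite qadj_matched lab2_matched /lab_unmatched ?eqxx.
- move=> j1 j2; rewrite /ma2 /mb2.
  case: (unliftP ord0 j1) => [i1 ->|->]; case: (unliftP ord0 j2) => [i2 ->|->];
    rewrite ?liftK ?unlift_none disjoint_set2 ?pt_eq ?andbF ?andbT //=.
  by rewrite (inj_eq lift_inj) => /matched_apart [-> -> -> ->].
Qed.

End Step.

Lemma decomposable_step n k : decomposable n k.+1 -> decomposable n.+2 k.+2.
Proof.
by move=> [lab [p [h [ma [mb [s t m d]]]]]]; do 5 eexists; exact: step_certificate s t m d.
Qed.

Definition u0 : qvert 0 := [ffun i => false].

Lemma qvert0 (u : qvert 0) : u = u0.
Proof. by apply/ffunP => -[]. Qed.

(* Q_2 is the 4-cycle: one path tree rooted at (F,F) and the matching edge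
   {(F,F), (F,T)}. *)
Lemma decomposable_base : decomposable 2 1.
Proof.
pose lab0 (s t : qvert 2) : option 'I_1 := if ~~ xc s && ~~ xc t then None else Some ord0.
pose p0 (i : 'I_1) (s : qvert 2) : qvert 2 :=
  match xc s, yc s with
  | true, false => pt u0 false false
  | true, true => pt u0 true false
  | false, true => pt u0 true true
  | false, false => pt u0 false false
  end.
exists lab0, p0, (fun _ s => cycle_pos (xc s) (yc s)),
  (fun _ => pt u0 false false), (fun _ => pt u0 false true); split.
- by move=> s t; rewrite /lab0 andbC.
- move=> i s; case: (ptP s) => u [x [y ->]]; rewrite (ord1 i) (qvert0 u) /p0 /lab0 !ptE.
  by case: x; case: y; rewrite ?pt_eq ?eqxx //= => _; rewrite !ptE ?qadj_x ?qadj_y.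
- by move=> _; split; [exact: qadj_y | rewrite /lab0 !ptE].
- by move=> i j; rewrite (ord1 i) (ord1 j) eqxx.
Qed.

Lemma decomposable_all k : decomposable (2 * k.+1) k.+1.
Proof.
elim: k => [|k IH]; first exact: decomposable_base.
by rewrite mulnS add2n; apply: decomposable_step.
Qed.

Theorem mainTheorem3 (k : nat) (hk : 1 <= k) :
  exists (T : 'I_k -> {set {set qvert (2 * k)}}) (M : {set {set qvert (2 * k)}}),
    [/\ forall i, spanning_tree (T i),
        forall i j, i != j -> [disjoint T i & T j],
        matching M /\ #|M| = k,
        forall i, [disjoint T i & M]
      & qedges (2 * k) = (\bigcup_(i < k) T i) :|: M].
Proof.
case: k hk => [//|k] _.
exact: decomposition_of_certificate (decomposable_all k).
Qed.
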